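(* Consider any instance of the budgeted matching-market pricing problem (defined in the context) in which every buyer $i$ satisfies $b_i\ge v_i$, and let $\langle\mathbf{X},\mathbf{p}\rangle$ be the outcome obtained by Algorithm 1 (described in the context). If $X_i\neq\emptyset$, then buyer $i$ obtains all the items of $X_i$ at a unique price per item, $\bar p_i=p_i/|X_i|$.
   Context: Instance: a finite set $I$ of $n$ buyers and a finite set $J$ of $m$ distinct items. Each buyer $i$ has a preference set $S_i\subseteq J$, a value $v_i>0$ for each item of $S_i$ (value $0$ for items outside $S_i$), and a budget $b_i\ge 0$. An outcome $\langle\mathbf{X},\mathbf{p}\rangle$ consists of pairwise disjoint bundles $X_i\subseteq J$ and payments $p_i\ge 0$. Algorithm 1 (ascending price auction). Throughout, $b_i$ denotes buyer $i$'s remaining budget (initially her budget, decreased by each payment), $J$ denotes the set of currently unsold items, and $\epsilon>0$ is an arbitrarily small price increment. For a price $p>0$, the demand of buyer $i$ is $D_i(p)=\min\{\lfloor b_i/p\rfloor,|S_i|\}$ if $p\le v_i$ and $D_i(p)=0$ if $p>v_i$. Let $A^p=\{i: v_i>p, D_i(p)>0\}$, $Q^p=\{i: v_i=p, D_i(p)>0\}$, $I^p=A^p\cup Q^p$. $G^p$ is the bipartite graph on $I^p\cup J$ with an edge $(i,j)$ iff $j\in S_i$, and $\bar G^p$ is its subgraph on $A^p\cup J$. A $B$-matching of $G^p$ (or $\bar G^p$) is a set of its edges in which every buyer $i$ lies in at most $D_i(p)$ edges and every item in at most one edge; $\mathcal{M}(G^p)$ denotes a maximum one. Given a $B$-matching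 $\mathcal{M}$, an augmenting path from buyer $i$ to item $j$ is a sequence $i=y_1,z_1,y_2,z_2,\dots,y_h,z_h=j$ of buyers $y_k$ and items $z_k$ with $z_k\in S_{y_k}$, $(y_k,z_k)\notin\mathcal{M}$ for all $k$, and $(z_k,y_{k+1})\in\mathcal{M}$ for $k<h$. ''Giving item $j$ to buyer $i$ at price $q$'' means: remove $j$ from $J$, add $j$ to $X_i$, increase $p_i$ by $q$ and decrease $b_i$ by $q$. Start with $p=0$, $X_i=\emptyset$, $p_i=0$. While a maximum $B$-matching of $G^p$ is nonempty: increase $p$ until $|\mathcal{M}(G^p)|>|\mathcal{M}(G^{p+\epsilon})|$ (a critical price). If $|\mathcal{M}(G^p)|>|\mathcal{M}(\bar G^p)|$, run Procedure I: let $J_Q=\bigcup_{i\in Q^p}S_i$; compute a maximum $B$-matching $\mathcal{M}$ of $\bar G^p$ that matches the minimum number of items of $J_Q$; let $\bar J$ be the items of $J$ unmatched in $\mathcal{M}$ and $N(\bar J)$ the buyers having an augmenting path w.r.t. $\mathcal{M}$ to some item of $\bar J$; give each item $j$ with $(i,j)\in\mathcal{M}$, $i\in N(\bar J)$, to $i$ at price $p$; and assign the items of $\bar J$ to buyers in $Q^p$ (respecting supply and budget constraints), each at price $p$. Otherwise run Procedure II: compute a maximum $B$-matching $\mathcal{M}$ of $G^{p+\epsilon}$; let $\bar J$ be the items unmatched in it and $N(\bar J)$ the buyers having an augmenting path to an item of $\bar J$; give each item $j$ with $(i,j)\in\mathcal{M}$, $i\in N(\bar J)$, to $i$ at price $p+\epsilon$;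 remove $\bar J$ from $J$; and remove all items no longer demanded by any buyer. *)

From HB Require Import structures.
From mathcomp Require Import all_boot all_order all_algebra.
From mathcomp Require Import reals.
Set Implicit Arguments. Unset Strict Implicit. Unset Printing Implicit Defensive.
Import Order.TTheory GRing.Theory Num.Theory.
Local Open Scope ring_scope.

(* Buyers: finite type I; items: finite type J.  S i = preference set,
   v i = value per item of S i, budgets given as I -> R.
   The algorithm is nondeterministic (choice of maximum B-matchings etc.);
   an outcome is the final state of ANY complete run. *)

Section Auction.
Variable R : realType.
Variables I J : finType.
Variable S : I -> {set J}.
Variable v : I -> R.

(* demand D_i(p) with remaining budget b; for p <= 0 (only p = 0 occurs)
   floor(b/p) is +infinity, so the demand is |S_i|. *)
Definition demand (b p : R) (i : I) : nat :=
  if p <= 0 then #|S i|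
  else if p <= v i then minn (Num.truncn (b / p)) #|S i| else 0%N.

Definition Aset (bud : I -> R) (p : R) : {set I} :=
  [set i | (p < v i) && (0 < demand (bud i) p i)%N].
Definition Qset (bud : I -> R) (p : R) : {set I} :=
  [set i | (v i == p) && (0 < demand (bud i) p i)%N].
Definition Iset (bud : I -> R) (p : R) : {set I} := Aset bud p :|: Qset bud p.
Definition caps (bud : I -> R) (p : R) : I -> nat := fun i => demand (bud i) p i.

Definition is_bmatch (A : {set I}) (cap : I -> nat) (U : {set J})
    (M : {set I * J}) : bool :=
  [&& [forall e in M, [&& e.1 \in A, e.2 \in U & e.2 \in S e.1]],
      [forall i, #|[set e in M | e.1 == i]| <= cap i]%N &
      [forall j, #|[set e in M | e.2 == j]| <= 1]%N].

Definition is_max_bmatch A cap U M : bool :=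
  is_bmatch A cap U M &&
  [forall M' : {set I * J}, is_bmatch A cap U M' ==> (#|M'| <= #|M|)%N].

Definition msize A cap U : nat :=
  \max_(M : {set I * J} | is_bmatch A cap U M) #|M|.

Definition matched (M : {set I * J}) : {set J} := [set e.2 | e in M].

(* augmenting path i = y1, z1, ..., yh, zh = j in the graph (A,U):
   (y_k,z_k) are graph edges not in M, (y_{k+1}, z_k) \in M *)
Definition augpath (A : {set I}) (U : {set J}) (M : {set I * J}) (i : I) (j : J) : Prop :=
  exists (e0 : I * J) (P : seq (I * J)),
    [/\ e0.1 = i, (last e0 P).2 = j,
        all (fun e => [&& e.1 \in A, e.2 \in U, e.2 \in S e.1 & e \notin M]) (e0 :: P)
      & path (fun e f => (f.1, e.2) \in M) e0 P].

Record state := State {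
  st_p : R;
  st_bud : I -> R;
  st_U : {set J};        (* currently unsold items *)
  st_X : I -> {set J};
  st_pay : I -> R;
  st_pr : J -> R         (* price at which each sold item was given *)
}.

Definition sell (s : state) (q : R) (T : {set I * J}) (r : R) : state :=
  State q
    (fun i => st_bud s i - r * #|[set j | (i, j) \in T]|%:R)
    (st_U s :\: matched T)
    (fun i => st_X s i :|: [set j | (i, j) \in T])
    (fun i => st_pay s i + r * #|[set j | (i, j) \in T]|%:R)
    (fun j => if j \in matched T then r else st_pr s j).

Definition remove_items (s : state) (Rm : {set J}) : state :=
  State (st_p s) (st_bud s) (st_U s :\: Rm) (st_X s) (st_pay s) (st_pr s).

Variable eps : R.

Definition msizeG (s : state) (p : R) : nat :=
  msize (Iset (st_bud s) p) (caps (st_bud s) p) (st_U s).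
Definition msizeGbar (s : state) (p : R) : nat :=
  msize (Aset (st_bud s) p) (caps (st_bud s) p) (st_U s).

Definition critical (s : state) (p : R) : bool := (msizeG s (p + eps) < msizeG s p)%N.

Definition procI (s : state) (q : R) (s' : state) : Prop :=
  exists (M MQ : {set I * J}) (N : {set I}),
    [/\ is_max_bmatch (Aset (st_bud s) q) (caps (st_bud s) q) (st_U s) M,
        (forall M', is_max_bmatch (Aset (st_bud s) q) (caps (st_bud s) q) (st_U s) M' ->
           (#|matched M :&: \bigcup_(i in Qset (st_bud s) q) S i|
             <= #|matched M' :&: \bigcup_(i in Qset (st_bud s) q) S i|)%N),
        (forall i, i \in N <-> (i \in Aset (st_bud s) q /\
           exists2 j, j \in st_U s :\: matched M &
             augpath (Aset (st_bud s) q) (st_U s) M i j)),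
        is_max_bmatch (Qset (st_bud s) q) (caps (st_bud s) q) (st_U s :\: matched M) MQ
      & s' = sell s q ([set e in M | e.1 \in N] :|: MQ) q].

Definition procII (s : state) (q : R) (s' : state) : Prop :=
  exists (M : {set I * J}) (N : {set I}),
    [/\ is_max_bmatch (Iset (st_bud s) (q + eps)) (caps (st_bud s) (q + eps)) (st_U s) M,
        (forall i, i \in N <-> (i \in Iset (st_bud s) (q + eps) /\
           exists2 j, j \in st_U s :\: matched M &
             augpath (Iset (st_bud s) (q + eps)) (st_U s) M i j))
      & s' = let s1 := sell s q [set e in M | e.1 \in N] (q + eps) in
             remove_items s1
               ((st_U s :\: matched M) :|:
                [set j in st_U s1 | [forall i, (j \in S i) ==>
                                       (demand (st_bud s1 i) (q + eps) i == 0%N)]])].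

Definition step (s s' : state) : Prop :=
  (0 < msizeG s (st_p s))%N /\
  exists k : nat,
    [/\ critical s (st_p s + k%:R * eps),
        (forall k' : nat, (k' < k)%N -> ~~ critical s (st_p s + k'%:R * eps))
      & if (msizeGbar s (st_p s + k%:R * eps) < msizeG s (st_p s + k%:R * eps))%N
        then procI s (st_p s + k%:R * eps) s'
        else procII s (st_p s + k%:R * eps) s'].

Variable b0 : I -> R.

Definition init_state : state :=
  State 0 b0 setT (fun _ => set0) (fun _ => 0) (fun _ => 0).

Inductive reachable : state -> Prop :=
| reach_init : reachable init_state
| reach_step s s' : reachable s -> step s s' -> reachable s'.

Definition alg1_outcome (s : state) : Prop :=
  reachable s /\ msizeG s (st_p s) = 0%N.

End Auction.

(* A buyer who has bought items at price r never buys again at another price: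
   either no item of her preference set is left unsold, or her demand is zero at
   every later price p <> r.  She buys at r in one of two ways.  If v_i = r
   (a buyer of Q^r in Procedure I), every higher price exceeds her value.
   Otherwise she is matched in a maximum B-matching and has an augmenting path to
   an unmatched item; augmenting along the path would enlarge the matching, so
   she is saturated and receives her whole demand min(floor(b_i/r), |S_i|),
   after which she owns all of S_i or her remaining budget is below r.  Sale
   prices never decrease: Procedure II sells at q + eps but leaves the current
   price at q, and q is then not critical, so the next sale is at q + eps or
   later.  Hence all items of X_i carry one price r and p_i = r |X_i|. *)

From HB Require Import structures.
From mathcomp Require Import all_boot all_order all_algebra.
From mathcomp Require Import reals.
From mathcomp Require Import zify lra.
Import Order.TTheory GRing.Theory Num.Theory.
Set Implicit Arguments. Unset Strict Implicit. Unset Printing Implicit Defensive.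

Lemma card_sep_setU1 (T : finType) (P : pred T) (x : T) (A : {set T}) :
  x \notin A -> #|[set y in x |: A | P y]| = (P x + #|[set y in A | P y]|)%N.
Proof.
move=> xA; case Px: (P x).
- have -> : [set y in x |: A | P y] = x |: [set y in A | P y].
    by apply/setP=> y; rewrite !inE; case: eqP => [->|] //=; rewrite Px.
  by rewrite cardsU1 inE (negbTE xA).
- have -> // : [set y in x |: A | P y] = [set y in A | P y].
  by apply/setP=> y; rewrite !inE; case: eqP => [->|] //=; rewrite Px andbF.
Qed.

Lemma card_sep_setD1 (T : finType) (P : pred T) (x : T) (A : {set T}) :
  x \in A -> #|[set y in A | P y]| = (P x + #|[set y in A :\ x | P y]|)%N.
Proof. by move=> xA; rewrite -{1}(setD1K xA) card_sep_setU1 // setD11. Qed.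

Lemma path_fail_step (T : Type) (r r' : rel T) (x : T) (s : seq T) :
  path r x s -> ~~ path r' x s ->
  exists s1 y s2, [/\ s = s1 ++ y :: s2, r (last x s1) y & ~~ r' (last x s1) y].
Proof.
elim: s x => [//|y s IH] x /= /andP[rxy ps].
case r'xy: (r' x y) => /= np; last by exists [::], y, s; rewrite r'xy.
have [s1 [z [s2 [-> rs r's]]]] := IH y ps np.
by exists (y :: s1), z, s2.
Qed.

Section BMatching.
Variables (I J : finType) (S : I -> {set J}).
Variables (A : {set I}) (cap : I -> nat) (U : {set J}).
Implicit Types (M : {set I * J}) (e f : I * J).

Local Notation is_bmatch := (is_bmatch S A cap U).

Definition deg M (i : I) : nat := #|[set e in M | e.1 == i]|.

Definition edge e : bool := [&& e.1 \in A, e.2 \in U & e.2 \in S e.1].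

Lemma bmatchP M : reflect
  [/\ forall e, e \in M -> edge e, forall i, (deg M i <= cap i)%N &
      forall j, (#|[set e in M | e.2 == j]| <= 1)%N]
  (is_bmatch M).
Proof.
apply: (iffP and3P).
- by case=> /forall_inP ? /forallP ? /forallP.
- by case=> M_edge M_deg M_item; split; [apply/forall_inP|apply/forallP|apply/forallP].
Qed.

Lemma bmatch_item_uniq M x y j :
  is_bmatch M -> (x, j) \in M -> (y, j) \in M -> x = y.
Proof.
case/bmatchP=> _ _ /(_ j) /card_le1_eqP le1 xM yM.
by have := le1 (x, j) (y, j); rewrite !inE xM yM eqxx => /(_ isT isT) [].
Qed.

Lemma bmatch_setU1 M e : is_bmatch M -> edge e -> e \notin M ->
  (deg M e.1 < cap e.1)%N -> e.2 \notin matched M -> is_bmatch (e |: M).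
Proof.
case/bmatchP=> M_edge M_deg M_item e_edge eM e_deg e_free; apply/bmatchP; split.
- by move=> x /setU1P [->|/M_edge].
- move=> i; rewrite /deg card_sep_setU1 //.
  by case: eqP => [<- //|_]; apply: M_deg.
- move=> j; rewrite card_sep_setU1 //; case: eqP => [<-|_]; last exact: M_item.
  suff -> : [set x in M | x.2 == e.2] = set0 by rewrite cards0.
  apply/setP=> x; rewrite !inE; apply/negP => /andP[xM /eqP xe].
  by move: e_free; rewrite -xe imset_f.
Qed.

Lemma bmatch_swap M e m : is_bmatch M -> edge e -> e \notin M -> m \in M ->
  m.2 = e.2 -> m.1 != e.1 -> (deg M e.1 < cap e.1)%N ->
  [/\ is_bmatch (e |: (M :\ m)), #|e |: (M :\ m)| = #|M| &
      (deg (e |: (M :\ m)) m.1 < cap m.1)%N].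
Proof.
case/bmatchP=> M_edge M_deg M_item e_edge eM mM m2 m1 e_deg.
have eMm : e \notin M :\ m by rewrite inE negb_and eM orbT.
have degE i : deg (e |: (M :\ m)) i + (m.1 == i) = (e.1 == i) + deg M i.
  by rewrite /deg card_sep_setU1 // [in RHS](card_sep_setD1 _ mM) /=; lia.
split.
- apply/bmatchP; split.
  + by move=> x /setU1P [->|/setD1P [_ /M_edge]].
  + move=> i; have := degE i; have := M_deg i.
    case: (eqVneq e.1 i) => [ei|_]; last by lia.
    by move: m1 e_deg; rewrite ei => /negbTE ->; lia.
  + move=> j; rewrite card_sep_setU1 //.
    by have := M_item j; rewrite (card_sep_setD1 _ mM) /= m2; lia.
- by rewrite cardsU1 eMm [#|M|](cardsD1 m) mM.
- have := degE m.1; have := M_deg m.1; rewrite eqxx eq_sym (negbTE m1); lia.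
Qed.

Definition alt_edge M e : bool :=
  [&& e.1 \in A, e.2 \in U, e.2 \in S e.1 & e \notin M].

Definition alt_link M e f : bool := (f.1, e.2) \in M.

Definition alternating M e0 (P : seq (I * J)) : bool :=
  all (alt_edge M) (e0 :: P) && path (alt_link M) e0 P.

Lemma alternating_suffix M e0 P1 x P2 :
  alternating M e0 (P1 ++ x :: P2) -> alternating M x P2.
Proof.
rewrite /alternating /= all_cat cat_path /=.
by case/andP=> /and3P[_ _ /andP[-> ->]] /and3P[_ _ ->].
Qed.

Lemma alternating_swap M e0 f P :
  alternating M e0 (f :: P) -> e0 \notin f :: P ->
  alternating (e0 |: (M :\ (f.1, e0.2))) f P \/
  exists2 Q, (size Q <= size P)%N & alternating M e0 Q && (last e0 Q == last f P).
Proof.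
rewrite /alternating /= => /andP[/andP[e0_alt /andP[f_alt P_alt]] /andP[e0f fP]] e0n.
set M1 := e0 |: _.
have alt1 : all (alt_edge M1) (f :: P).
  apply/allP => x xfP; rewrite /alt_edge.
  have /and4P[-> -> -> xM] : alt_edge M x.
    by move: xfP; rewrite inE => /orP[/eqP->|/(allP P_alt)].
  rewrite /M1 !inE negb_or negb_and xM orbT andbT /=.
  by apply: contraNneq e0n => <-.
have [fP1|] := boolP (path (alt_link M1) f P); first by left; apply/andP.
case/(path_fail_step fP) => P1 [y [P2 [PE M_link M1_link]]]; right.
exists (y :: P2); first by rewrite PE size_cat /= leq_addl.
move: M_link M1_link; rewrite /alt_link /M1 !inE => ->; rewrite andbT negb_or negbK.
case/andP=> _ /eqP [y1 _].
rewrite e0_alt /= y1 (e0f : (f.1, e0.2) \in M) PE last_cat /= eqxx andbT.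
move: P_alt fP; rewrite PE all_cat cat_path /=.
by case/andP=> _ /andP[-> ->] /andP[_ /andP[_ ->]].
Qed.

Lemma alternating_path_grows M e0 P :
  is_bmatch M -> (deg M e0.1 < cap e0.1)%N ->
  (last e0 P).2 \notin matched M -> alternating M e0 P ->
  exists2 M', is_bmatch M' & (#|M| < #|M'|)%N.
Proof.
have [n] := ubnP (size P); elim: n => // n IH in M e0 P *.
rewrite ltnS => szP bm e0_deg last_free alt.
case: P => [|f P] in szP last_free alt *.
  have /andP[/andP[/and4P[e0A e0U e0S e0M] _] _] := alt.
  exists (e0 |: M); last by rewrite cardsU1 e0M.
  by apply: bmatch_setU1; rewrite // /edge e0A e0U.
have [e0_in|e0n] := boolP (e0 \in f :: P).
  move: szP last_free alt; case/splitPr: _ / e0_in => P1 P2 szP last_free alt.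
  apply: (IH M e0 P2) => //; last exact: alternating_suffix alt.
    by move: szP; rewrite size_cat /=; lia.
  by move: last_free; rewrite last_cat.
have /andP[/andP[/and4P[e0A e0U e0S e0M] _] /andP[e0f _]] := alt.
set m := (f.1, e0.2) in e0f.
have m1 : m.1 != e0.1.
  by apply: contraNneq e0M => /= f1; rewrite [e0]surjective_pairing -f1.
have e0_edge : edge e0 by rewrite /edge e0A e0U.
have [bm1 card1 deg1] := bmatch_swap bm e0_edge e0M e0f erefl m1 e0_deg.
case: (alternating_swap alt e0n) => [alt1|[Q szQ /andP[altQ /eqP lastQ]]].
  have [|M' bm' lt'] := IH _ f P szP bm1 deg1 _ alt1; last by exists M'; rewrite // -card1.
  apply: contra last_free => /imsetP [x /setU1P [->|/setD1P [_ xM]] ->].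
    by apply/imsetP; exists m.
  exact: imset_f.
by apply: (IH M e0 Q) => //; [apply: leq_trans szP | rewrite lastQ].
Qed.

Lemma augpath_saturated M i j :
  is_max_bmatch S A cap U M -> augpath S A U M i j -> j \in U :\: matched M ->
  deg M i = cap i.
Proof.
case/andP=> bm /forallP maxM [e0 [P [<- <- alt_all alt_path]]] /setDP [_ free].
apply/eqP; rewrite eqn_leq; have /bmatchP [_ -> _] := bm; rewrite leqNgt /=.
apply/negP => unsat.
have [|M' bm' lt] := alternating_path_grows bm unsat free; first exact/andP.
by have := maxM M'; rewrite bm' /= leqNgt lt.
Qed.

Lemma bmatch_le_msize M : is_bmatch M -> (#|M| <= msize S A cap U)%N.
Proof. exact: (leq_bigmax_cond (F := fun M : {set I * J} => #|M|)). Qed.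

Lemma msize_le_card : (msize S A cap U <= #|U|)%N.
Proof.
apply/bigmax_leqP => M bm.
have inj : {in M &, injective (fun e : I * J => e.2)}.
  move=> [x j] [y j'] xM yM /= jj'; rewrite jj' in xM *.
  by rewrite (bmatch_item_uniq bm xM yM).
rewrite -(card_in_imset inj); apply/subset_leq_card/subsetP => _ /imsetP [e eM ->].
by case/bmatchP: bm => /(_ e eM) /and3P[].
Qed.

End BMatching.

Section Auction.
Variables (R : realType) (I J : finType) (S : I -> {set J}) (v : I -> R) (eps : R).
Implicit Types (s : state R I J) (T M : {set I * J}) (i : I) (j : J).
Local Open Scope ring_scope.

Local Notation bundle T i := [set j | (i, j) \in T].

Lemma bundle_sub_matched T i : bundle T i \subset matched T.
Proof. by apply/subsetP => j; rewrite inE => /(imset_f (fun e : I * J => e.2)). Qed.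

Lemma bundle_sold T i (U : {set J}) : bundle T i :&: (U :\: matched T) = set0.
Proof.
apply/setP => j; rewrite !inE; apply/negP => /and3P [jT + _].
by rewrite (subsetP (bundle_sub_matched T i)) ?inE.
Qed.

Lemma card_bundle T i : #|bundle T i| = deg T i.
Proof.
have pair_inj : injective (pair i : J -> I * J) by move=> x y [].
rewrite /deg -(card_imset _ pair_inj); apply: eq_card => -[x j]; rewrite !inE /=.
apply/imsetP/andP => [[j' jT [-> ->]]|[xjT /eqP xi]].
  by rewrite inE in jT.
by exists j; rewrite ?inE -xi.
Qed.

Definition buys_only_at s i (r P0 : R) : Prop :=
  S i :&: st_U s = set0 \/
  forall p, P0 <= p -> p != r -> demand S v (st_bud s i) p i = 0%N.

Definition uniform_price s (P0 : R) i : Prop :=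
  exists r, [/\ forall j, j \in st_X s i -> st_pr s j = r,
                st_pay s i = r * #|st_X s i|%:R &
                st_X s i != set0 -> buys_only_at s i r P0].

Definition bundles_sold s : Prop := forall i, st_X s i :&: st_U s = set0.

Lemma buys_only_at_mono s s' i r P0 P0' :
  st_U s' \subset st_U s -> st_bud s' i = st_bud s i -> P0 <= P0' ->
  buys_only_at s i r P0 -> buys_only_at s' i r P0'.
Proof.
move=> U's bud' P0P0' [SU|dem0]; [left|right].
  by apply/eqP; rewrite -subset0 -SU setIS.
by move=> p P0p; rewrite bud'; apply: dem0; apply: le_trans P0p.
Qed.

Lemma buys_only_at_price s i r' r P0 j : buys_only_at s i r' P0 ->
  j \in S i -> j \in st_U s -> P0 <= r -> (0 < demand S v (st_bud s i) r i)%N ->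
  r' = r.
Proof.
case=> [SU|dem0] jS jU P0r dpos.
  by move/setP: SU => /(_ j); rewrite !inE jS jU.
by apply/eqP; apply: contraTT dpos; rewrite eq_sym => /(dem0 _ P0r) ->.
Qed.

Lemma buys_only_at_value s i r : 0 < v i -> v i = r -> buys_only_at s i r r.
Proof.
move=> v_gt0 vr; right => p rp pr.
have ltrp : r < p by rewrite lt_def pr.
have p_gt0 : 0 < p by rewrite (lt_trans v_gt0) // vr.
by rewrite /demand leNgt p_gt0 /= leNgt vr ltrp.
Qed.

(* Either B is all of S i, or the remaining budget bud - r * floor(bud / r)
   is below r. *)
Lemma buys_only_at_demand_met s i r bud (B : {set J}) :
  B != set0 -> B \subset S i -> #|B| = demand S v bud r i ->
  st_bud s i = bud - r * #|B|%:R -> B :&: st_U s = set0 ->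
  buys_only_at s i r r.
Proof.
move=> Bn0 BS cardB bud' BU.
have all_bought : (#|S i| <= #|B|)%N -> buys_only_at s i r r.
  by move=> le; left; have /eqP <- : B == S i by rewrite eqEcard BS le.
move: cardB; rewrite /demand; case: ifP => [_ cardB|/negbT].
  by apply: all_bought; rewrite cardB.
rewrite -ltNge => r_gt0; case: ifP => _; last by move/eqP; rewrite cards_eq0 (negbTE Bn0).
case: (leqP #|S i| (Num.truncn (bud / r))) => [le|lt] cardB.
  by apply: all_bought; rewrite cardB.
right => p rp pr; have ltrp : r < p by rewrite lt_def pr.
rewrite /demand leNgt (lt_trans r_gt0 ltrp) /=; case: ifP => // _.
suff -> : Num.truncn (st_bud s i / p) = 0%N by rewrite min0n.
apply/truncn0Pn; rewrite -ltNge ltr_pdivrMr ?(lt_trans r_gt0 ltrp) // mul1r bud' cardB.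
have := truncnS_gt (bud / r); rewrite ltr_pdivrMr // -natr1.
move: (Num.truncn (bud / r))%:R => t; lra.
Qed.

Lemma bundles_sold_sell s q T r : bundles_sold s -> bundles_sold (sell s q T r).
Proof. by move=> disj i; rewrite /= setIUl bundle_sold setU0 setIDA disj set0D. Qed.

Lemma bundles_sold_remove_items s Rm : bundles_sold s -> bundles_sold (remove_items s Rm).
Proof. by move=> disj i; apply/eqP; rewrite -subset0 -(disj i) setIS // subsetDl. Qed.

Lemma uniform_price_remove_items s Rm P0 i :
  uniform_price s P0 i -> uniform_price (remove_items s Rm) P0 i.
Proof.
case=> r [prX payX onlyX]; exists r; split => // /onlyX.
by apply: buys_only_at_mono => //; apply: subsetDl.
Qed.

Lemma sell_uniform_price s q T r P0 P0' i :
  bundles_sold s -> matched T \subset st_U s -> uniform_price s P0 i ->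
  P0 <= r -> P0 <= P0' ->
  (bundle T i != set0 -> [/\ bundle T i \subset S i,
     (0 < demand S v (st_bud s i) r i)%N & buys_only_at (sell s q T r) i r P0']) ->
  uniform_price (sell s q T r) P0' i.
Proof.
move=> disj TU [ri [prX payX onlyX]] P0r P0P0' sold.
have X_unsold j : j \in st_X s i -> j \notin matched T.
  move=> jX; apply: contraT; rewrite negbK => /(subsetP TU) jU.
  by move/setP: (disj i) => /(_ j); rewrite !inE jX jU.
have [B0|Bn0] := eqVneq (bundle T i) set0.
  exists ri; rewrite /= B0 setU0 cards0 mulr0 addr0; split => //.
    by move=> j jX; rewrite (negbTE (X_unsold j jX)) prX.
  by move/onlyX; apply: buys_only_at_mono; rewrite /= ?B0 ?cards0 ?mulr0 ?subr0 ?subsetDl.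
have [BS dpos onlyB] := sold Bn0.
have ri_r : st_X s i != set0 -> ri = r.
  have [j jB] := set0Pn _ Bn0.
  move/onlyX/(buys_only_at_price (j := j)); apply => //; first exact: (subsetP BS).
  exact/(subsetP TU)/(subsetP (bundle_sub_matched T i)).
have XB : st_X s i :&: bundle T i = set0.
  apply/setP => j; rewrite in_setI in_set0; apply/negP => /andP[/X_unsold].
  by move=> /negP + jB; apply; apply: subsetP (bundle_sub_matched T i) j jB.
exists r; split => //=.
  move=> j /setUP [jX|jB]; last by rewrite (subsetP (bundle_sub_matched T i) j jB).
  by rewrite (negbTE (X_unsold j jX)) prX //; apply: ri_r; apply/set0Pn; exists j.
rewrite payX cardsU XB cards0 subn0 natrD mulrDr.
have [X0|/ri_r -> //] := eqVneq (st_X s i) set0.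
by rewrite X0 cards0 !mulr0.
Qed.

(* P0 bounds all later sale prices from below; the second disjunct describes
   the state left by Procedure II, which sells above the current price. *)
Definition auction_inv s : Prop :=
  bundles_sold s /\
  exists2 P0, P0 <= st_p s \/ (P0 <= st_p s + eps /\ ~~ critical S v eps s (st_p s))
            & forall i, uniform_price s P0 i.

Lemma Iset_demand_gt0 bud p i :
  i \in Iset S v bud p -> (0 < demand S v (bud i) p i)%N.
Proof. by rewrite !inE => /orP [] /andP[]. Qed.

Lemma mem_Iset_bud bud bud' p i :
  bud' i = bud i -> (i \in Iset S v bud' p) = (i \in Iset S v bud p).
Proof. by move=> bud_i; rewrite !inE bud_i. Qed.

Lemma augpath_buys_only_at s q T r (A : {set I}) M i j :
  is_max_bmatch S A (caps S v (st_bud s) r) (st_U s) M ->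
  augpath S A (st_U s) M i j -> j \in st_U s :\: matched M ->
  bundle T i = bundle M i -> bundle T i != set0 ->
  buys_only_at (sell s q T r) i r r.
Proof.
move=> maxM aug jfree BT Bn0; have /andP[/bmatchP[M_edge _ _] _] := maxM.
apply: (buys_only_at_demand_met (bud := st_bud s i) Bn0) => //.
- by apply/subsetP => j'; rewrite BT inE => /M_edge /and3P[].
- by rewrite BT card_bundle (augpath_saturated maxM aug jfree).
- exact: bundle_sold.
Qed.

Lemma procI_inv s s' q P0 : (forall i, 0 < v i) -> P0 <= q ->
  bundles_sold s -> (forall i, uniform_price s P0 i) ->
  procI S v s q s' -> auction_inv s'.
Proof.
move=> v_gt0 P0q disj unif [M [MQ [N [maxM _ Ndef /andP[bmMQ _] ->]]]].
set T := _ :|: MQ.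
have /andP[/bmatchP[M_edge _ _] _] := maxM; have /bmatchP[MQ_edge _ _] := bmMQ.
have T_edge e : e \in T -> e.2 \in st_U s /\ e.2 \in S e.1.
  by case/setUP => [/setIdP[/M_edge/and3P[]] | /MQ_edge/and3P[_ /setDP[]]].
have TU : matched T \subset st_U s.
  by apply/subsetP => _ /imsetP [e /T_edge [eU _] ->].
split; first exact: bundles_sold_sell.
exists q; first by left.
move=> i; apply: (sell_uniform_price disj TU (unif i) P0q P0q) => Bn0.
have BS : bundle T i \subset S i by apply/subsetP => j; rewrite inE => /T_edge [].
have [iN|iN] := boolP (i \in N).
  have [iA [j jfree aug]] := (Ndef i).1 iN.
  have BT : bundle T i = bundle M i.
    apply/setP => j'; rewrite !inE /= iN andbT; apply/orP/idP => [[//|]|]; last by left.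
    case/MQ_edge/and3P => /= iQ _ _; move: iA iQ.
    by rewrite !inE => /andP[lt _] /andP[/eqP vq _]; rewrite vq ltxx in lt.
  split => //; first by move: iA; rewrite inE => /andP[].
  exact: augpath_buys_only_at maxM aug jfree BT Bn0.
have [j] := set0Pn _ Bn0; rewrite !inE /= (negbTE iN) andbF /=.
case/MQ_edge/and3P; rewrite inE => /andP[/eqP vq dpos] _ _.
by split => //; apply: buys_only_at_value.
Qed.

(* Items still unsold after Procedure II are matched in [M] to buyers whose
   budget did not change, so the maximum matching size at [q + eps] is already
   the number of unsold items: [q] is not critical for the new state. *)
Lemma procII_not_critical s q s2 : procII S v eps s q s2 -> ~~ critical S v eps s2 q.
Proof.
case=> M [N [/andP[bmM _] _ ->]]; cbv zeta.
set T := [set e in M | e.1 \in N]; set s1 := sell s q T (q + eps).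
set s' := remove_items s1 _; set M' := [set e in M | e.1 \notin N].
have /bmatchP[M_edge M_deg M_item] := bmM.
have bud1 i : i \notin N -> st_bud s1 i = st_bud s i.
  move=> iN; rewrite /= (_ : [set j | (i, j) \in T] = set0) ?cards0 ?mulr0 ?subr0 //.
  by apply/setP => j; rewrite !inE (negbTE iN) andbF.
have M'_unsold e : e \in M' -> e.2 \in st_U s'.
  case/setIdP => eM eN; have /and3P[eI eU eS] := M_edge e eM.
  apply/setDP; split; first (apply/setDP; split => //).
    apply/imsetP => -[f /setIdP[fM fN] fe].
    have eM' : (e.1, e.2) \in M by rewrite -surjective_pairing.
    rewrite [f]surjective_pairing -fe in fM.
    by rewrite (bmatch_item_uniq bmM fM eM') (negbTE eN) in fN.
  rewrite in_setU negb_or; apply/andP; split; first by rewrite in_setD (imset_f _ eM).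
  rewrite inE negb_and; apply/orP; right; apply/negP => /forallP /(_ e.1).
  rewrite eS implyTb bud1 // => /eqP dem0.
  by move: (Iset_demand_gt0 eI); rewrite dem0.
have bmM' : is_bmatch S (Iset S v (st_bud s1) (q + eps)) (caps S v (st_bud s1) (q + eps))
    (st_U s') M'.
  apply/bmatchP; split.
  - move=> e e_M'; have /setIdP[eM eN] := e_M'; have /and3P[eI _ eS] := M_edge e eM.
    by rewrite /edge (mem_Iset_bud _ (bud1 _ eN)) eI M'_unsold.
  - move=> i; have [iN|iN] := boolP (i \in N).
      rewrite (_ : deg M' i = 0%N) //; apply/eqP; rewrite cards_eq0.
      apply/eqP/setP => e; rewrite !inE.
      by apply/negP => /andP[/andP[_ eN] /eqP ei]; rewrite ei iN in eN.
    rewrite /caps bud1 //; apply: leq_trans (M_deg i); apply/subset_leq_card/subsetP.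
    by move=> e; rewrite !inE => /andP[/andP[-> _] ->].
  - move=> j; apply: leq_trans (M_item j); apply/subset_leq_card/subsetP.
    by move=> e; rewrite !inE => /andP[/andP[-> _] ->].
have U'M' : st_U s' \subset matched M'.
  apply/subsetP => j /setDP [/setDP [jU jT]].
  rewrite in_setU in_setD jU andbT negb_or negbK => /andP[/imsetP [e eM je] _]; subst j.
  apply/imset_f/setIdP; split => //; apply: contra jT => eN.
  by apply/imsetP; exists e; rewrite // /T inE eM.
rewrite /critical /msizeG -leqNgt.
apply: leq_trans (msize_le_card _ _ _ _) _.
apply: leq_trans (subset_leq_card U'M') _.
exact: leq_trans (leq_imset_card _ _) (bmatch_le_msize bmM').
Qed.

Lemma procII_inv s s' q P0 : P0 <= q + eps ->
  bundles_sold s -> (forall i, uniform_price s P0 i) ->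
  procII S v eps s q s' -> auction_inv s'.
Proof.
move=> P0q disj unif proc; have not_crit := procII_not_critical proc.
case: proc not_crit => M [N [maxM Ndef ->]]; cbv zeta => not_crit.
set T := [set e in M | e.1 \in N].
have /andP[/bmatchP[M_edge _ _] _] := maxM.
have TU : matched T \subset st_U s.
  by apply/subsetP => _ /imsetP [e /setIdP [/M_edge/and3P[_ eU _] _] ->].
split; first exact/bundles_sold_remove_items/bundles_sold_sell.
exists (q + eps); first by right.
move=> i; apply/uniform_price_remove_items.
apply: (sell_uniform_price disj TU (unif i) P0q P0q) => Bn0.
have iN : i \in N.
  by apply: contraNT Bn0 => iN; apply/eqP/setP => j; rewrite !inE (negbTE iN) andbF.
have [iI [j jfree aug]] := (Ndef i).1 iN.
have BT : bundle T i = bundle M i by apply/setP => j'; rewrite !inE /= iN andbT.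
split; [|exact: Iset_demand_gt0 iI|exact: augpath_buys_only_at maxM aug jfree BT Bn0].
by apply/subsetP => j'; rewrite BT inE => /M_edge/and3P[].
Qed.

Lemma step_inv s s' : 0 < eps -> (forall i, 0 < v i) ->
  auction_inv s -> step S v eps s s' -> auction_inv s'.
Proof.
move=> eps_gt0 v_gt0 [disj [P0 P0_le unif]] [_ [k [crit _ proc]]].
set q := st_p s + k%:R * eps in crit proc.
have P0q : P0 <= q.
  case: P0_le => [P0p|[P0p not_crit]]; apply: le_trans P0p _.
    by rewrite lerDl mulr_ge0 // ltW.
  have k_gt0 : (0 < k)%N.
    by rewrite lt0n; apply: contraNneq not_crit => k0; rewrite /q k0 mul0r addr0 in crit.
  by rewrite lerD2l; apply: ler_peMl; rewrite ?ler1n ?ltW.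
case: ifP proc => _ proc; first exact: procI_inv v_gt0 P0q disj unif proc.
apply: procII_inv _ disj unif proc.
by apply: le_trans P0q _; rewrite lerDl ltW.
Qed.

Lemma reachable_inv b0 s : 0 < eps -> (forall i, 0 < v i) ->
  reachable S v eps b0 s -> auction_inv s.
Proof.
move=> eps_gt0 v_gt0; elim => [|s1 s2 _ IH]; last exact: step_inv.
split; first by move=> i; rewrite set0I.
exists 0; first by left.
by move=> i; exists 0; split; rewrite ?inE ?mul0r ?eqxx.
Qed.

End Auction.

Local Open Scope ring_scope.
Unset Implicit Arguments.

Theorem lemma5 (R : realType) (I J : finType) (S : I -> {set J}) (v b : I -> R) :
  (forall i, 0 < v i) -> (forall i, 0 <= b i) -> (forall i, v i <= b i) ->
  exists2 eps0 : R, 0 < eps0 &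
    forall eps : R, 0 < eps -> eps < eps0 ->
    forall s : state R I J, alg1_outcome S v eps b s ->
    forall i : I, st_X s i != set0 ->
      exists pbar : R,
        (forall j, j \in st_X s i -> st_pr s j = pbar) /\
        pbar = st_pay s i / #|st_X s i|%:R.
Proof.
(* The invariant holds for arbitrary budgets and any eps > 0. *)
move=> v_gt0 _ _; exists 1; first exact: ltr01.
move=> eps eps_gt0 _ s [reach _] i Xn0.
have [_ [P0 _ unif]] := reachable_inv eps_gt0 v_gt0 reach.
have [r [prX payX _]] := unif i.
by exists r; split; rewrite // payX mulfK // pnatr_eq0 cards_eq0.
Qed.
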